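(* Let $n$ be a positive integer and let $p_1,\dots,p_r$ be pairwise coprime positive integers, and $m=\prod_{i=1}^r p_i$. Then $P(m,n)=\mathrm{lcm}\left(P(p_1,n),\dots,P(p_r,n)\right)$.
   Context: For positive integers $m,n$, let $\mathbf{Z}_m$ be the integers modulo $m$ and $T:\mathbf{Z}_m^n\to\mathbf{Z}_m^n$, $T(a_0,\dots,a_{n-1})=(a_0+a_1,a_1+a_2,\dots,a_{n-1}+a_0)$. For $\mathbf{a}\in\mathbf{Z}_m^n$ the cycle length of $(T^k\mathbf{a})_{k\ge0}$ is the smallest positive integer $P$ such that there is $N$ with $T^{k+P}\mathbf{a}=T^k\mathbf{a}$ for all $k\ge N$. $P(m,n)$ denotes the maximum of these cycle lengths over all $\mathbf{a}\in\mathbf{Z}_m^n$. *)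

From mathcomp Require Import all_boot.
Set Implicit Arguments. Unset Strict Implicit. Unset Printing Implicit Defensive.

(* Elements of (Z_m)^n are represented as finite functions a : 'I_n -> nat
   whose entries are the canonical residues, i.e. a i < m. *)
Definition is_vec (m n : nat) (a : {ffun 'I_n -> nat}) : Prop :=
  forall i, a i < m.

Definition Tmap (m n : nat) (a : {ffun 'I_n -> nat}) : {ffun 'I_n -> nat} :=
  [ffun i => (a i + a (ordS i)) %% m].

Definition is_eventual_period (m n : nat) (a : {ffun 'I_n -> nat}) (P : nat) : Prop :=
  0 < P /\ exists N, forall k, N <= k ->
    iter (k + P) (@Tmap m n) a = iter k (@Tmap m n) a.

Definition cycle_length (m n : nat) (a : {ffun 'I_n -> nat}) (P : nat) : Prop :=
  @is_eventual_period m n a P /\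
  forall Q, @is_eventual_period m n a Q -> P <= Q.

(* Pmax m n q  <->  q = P(m,n), the maximum cycle length over all a in Z_m^n. *)
Definition Pmax (m n q : nat) : Prop :=
  (exists a, @is_vec m n a /\ @cycle_length m n a q) /\
  (forall a Q, @is_vec m n a -> @cycle_length m n a Q -> Q <= q).

(* Over the integers the map U(a)_i = a_i + a_(i+1) is linear and commutes with
   the cyclic shift, and every unit vector is a shift of any other.  Hence an
   eventual period of the orbit of a unit vector modulo d is an eventual period
   of every orbit modulo d: P(d,n) is the least eventual period of a unit vector,
   and every cycle length modulo d divides it.  By the Chinese remainder theorem
   a positive P is an eventual period modulo m = p_1 ... p_r iff it is one modulo
   each p_i, so the eventual periods of a unit vector modulo m are exactly the
   positive multiples of lcm(P(p_1,n), ..., P(p_r,n)). *)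

From mathcomp Require Import all_boot.
From Stdlib Require Import Classical.
From mathcomp Require Import zify.
Set Implicit Arguments. Unset Strict Implicit. Unset Printing Implicit Defensive.

Section EventualPeriod.
Variables (X : Type) (x : nat -> X).

Definition eventual_period (P : nat) : Prop :=
  0 < P /\ exists N, forall k, N <= k -> x (k + P) = x k.

Definition least_eventual_period (c : nat) : Prop :=
  eventual_period c /\ forall Q, eventual_period Q -> c <= Q.

Lemma eventual_periodD P Q :
  eventual_period P -> eventual_period Q -> eventual_period (P + Q).
Proof.
move=> [P_gt0 [N hN]] [Q_gt0 [M hM]]; split; first by rewrite addn_gt0 P_gt0.
exists (maxn N M) => k; rewrite geq_max => /andP[le_Nk le_Mk].
rewrite addnA hM; first exact: hN.
exact: leq_trans le_Mk (leq_addr _ _).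
Qed.

Lemma eventual_periodB P Q :
  Q < P -> eventual_period P -> eventual_period Q -> eventual_period (P - Q).
Proof.
move=> lt_QP [_ [N hN]] [_ [M hM]]; split; first by rewrite subn_gt0.
exists (maxn N M) => k; rewrite geq_max => /andP[le_Nk le_Mk].
rewrite -[LHS]hM; last exact: leq_trans le_Mk (leq_addr _ _).
by rewrite -addnA subnK ?hN // ltnW.
Qed.

Lemma eventual_period_dvd c P :
  0 < P -> c %| P -> eventual_period c -> eventual_period P.
Proof.
move=> P_gt0 /dvdnP[k def_P] hc; rewrite {}def_P in P_gt0 *.
case: k P_gt0 => // k _; elim: k => [|k IH]; first by rewrite mul1n.
by rewrite mulSn; apply: eventual_periodD.
Qed.

Lemma least_eventual_period_dvd c P :
  least_eventual_period c -> eventual_period P -> c %| P.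
Proof.
case=> hc c_min; elim/ltn_ind: P => P IH hP.
have := c_min P hP; rewrite leq_eqVlt => /orP[/eqP-> | lt_cP]; first exact: dvdnn.
rewrite -(subnK (ltnW lt_cP)) dvdn_addl ?dvdnn //; apply: IH.
  by rewrite ltn_subrL; case: hc => ->; case: hP.
exact: eventual_periodB.
Qed.

Lemma least_eventual_periodP c :
  least_eventual_period c -> forall Q, eventual_period Q <-> 0 < Q /\ c %| Q.
Proof.
move=> hc Q; split=> [hQ | [Q_gt0 c_dvd_Q]].
  by split; [case: hQ | exact: least_eventual_period_dvd hQ].
exact: eventual_period_dvd c_dvd_Q hc.1.
Qed.

Lemma least_eventual_period_multiples c : 0 < c ->
  (forall Q, eventual_period Q <-> 0 < Q /\ c %| Q) -> least_eventual_period c.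
Proof.
move=> c_gt0 hmul; split; first by apply/hmul; rewrite c_gt0 dvdnn.
by move=> Q /hmul[Q_gt0 c_dvd_Q]; apply: dvdn_leq.
Qed.

Lemma ex_least_eventual_period P :
  eventual_period P -> exists c, least_eventual_period c.
Proof.
elim/ltn_ind: P => P IH hP.
have [[Q [hQ lt_QP]] | no_smaller] := classic (exists Q, eventual_period Q /\ Q < P).
  exact: IH hQ.
exists P; split=> // Q hQ; rewrite leqNgt; apply/negP => lt_QP.
by apply: no_smaller; exists Q.
Qed.

End EventualPeriod.

Lemma eq_eventual_period X (x y : nat -> X) P :
  x =1 y -> eventual_period x P <-> eventual_period y P.
Proof.
move=> eq_xy; split=> -[P_gt0 [N hN]]; split=> //; exists N => k le_Nk.
  by rewrite -!eq_xy hN.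
by rewrite !eq_xy hN.
Qed.

Lemma eq_least_eventual_period X (x y : nat -> X) c :
  x =1 y -> least_eventual_period x c <-> least_eventual_period y c.
Proof.
move=> eq_xy; rewrite /least_eventual_period (eq_eventual_period _ eq_xy).
by split=> -[hc c_min]; split=> // Q /(eq_eventual_period _ eq_xy); apply: c_min.
Qed.

Lemma eventual_period_comp X Y (h : X -> Y) (x : nat -> X) P :
  eventual_period x P -> eventual_period (h \o x) P.
Proof. by case=> P_gt0 [N hN]; split=> //; exists N => k /hN /= ->. Qed.

Lemma eventual_period_joint (I : finType) X Y (h : I -> X -> Y) (x : nat -> X) P :
  (forall k l, (forall i, h i (x k) = h i (x l)) -> x k = x l) -> 0 < P ->
  (forall i, eventual_period (h i \o x) P) -> eventual_period x P.
Proof.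
move=> h_joint P_gt0 hP; split=> //.
have /fin_all_exists[N hN] :
    forall i, exists N : nat, forall k, N <= k -> h i (x (k + P)) = h i (x k).
  by move=> i; case: (hP i).
exists (\max_i N i) => k le_Nk; apply: h_joint => i.
exact: hN (leq_trans (leq_bigmax i) le_Nk).
Qed.

Lemma iter_eventual_period T (g : T -> T) (a : T) i j : i < j ->
  iter i g a = iter j g a -> eventual_period (fun k => iter k g a) (j - i).
Proof.
move=> lt_ij eq_ij; split; first by rewrite subn_gt0.
exists i => k le_ik; have -> : k + (j - i) = (k - i) + j by lia.
by rewrite iterD -eq_ij -iterD subnK.
Qed.

Lemma finType_seq_repeats (S : finType) (y : nat -> S) :
  exists i j, i < j /\ y i = y j.
Proof.
pose z (k : 'I_#|S|.+1) := y k.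
have /injectivePn[i [j neq_ij eq_ij]] : ~~ injectiveb z.
  by apply/injectiveP => /leq_card; rewrite card_ord ltnn.
case: (ltngtP i j) => [lt_ij | lt_ji | /val_inj eq_ij'].
- by exists i, j.
- by exists j, i.
- by rewrite eq_ij' eqxx in neq_ij.
Qed.

Section CoprimeProduct.
Variables (r : nat) (p : 'I_r -> nat).
Hypothesis p_coprime : forall i j, i != j -> coprime (p i) (p j).

Lemma prod_coprime_dvdn z : (forall i, p i %| z) -> \prod_i p i %| z.
Proof.
elim: r p p_coprime => [|r' IH] p' p'_coprime p'_dvd; first by rewrite big_ord0 dvd1n.
have lift_neq (i j : 'I_r') :
    i != j -> widen_ord (leqnSn r') i != widen_ord (leqnSn r') j.
  by apply: contra => /eqP/(congr1 val) eq_ij; apply/eqP/val_inj.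
rewrite big_ord_recr /= Gauss_dvd ?p'_dvd ?andbT.
  by apply: IH => [i j /lift_neq /p'_coprime | i]; last exact: p'_dvd.
apply: (big_ind (coprime^~ _)) => [|a b ha hb|i _]; first exact: coprime1n.
  by rewrite coprimeMl ha hb.
by apply: p'_coprime; rewrite -(inj_eq val_inj) /= neq_ltn ltn_ord.
Qed.

Lemma eqn_mod_prod a b : (forall i, a = b %[mod p i]) -> a = b %[mod \prod_i p i].
Proof.
wlog le_ba : a b / b <= a => [hwlog eq_ab|eq_ab].
  case: (leqP b a) => [|/ltnW] le; first exact: hwlog.
  by symmetry; apply: hwlog => // i; rewrite eq_ab.
apply/eqP; rewrite eqn_mod_dvd //; apply: prod_coprime_dvdn => i.
by rewrite -eqn_mod_dvd // eq_ab.
Qed.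

End CoprimeProduct.

Section Ducci.
Variable n : nat.
Implicit Types (d : nat) (f g : {ffun 'I_n -> nat}).

Definition ducci f : {ffun 'I_n -> nat} := [ffun i => f i + f (ordS i)].

Definition vmod d f : {ffun 'I_n -> nat} := [ffun i => f i %% d].

Definition unitv (j : 'I_n) : {ffun 'I_n -> nat} := [ffun i => (i == j) : nat].

Definition rotv f : {ffun 'I_n -> nat} := [ffun i => f (ord_pred i)].

Definition ducci_orbit d f (k : nat) := iter k (@Tmap d n) (vmod d f).

Lemma vmod_is_vec d f : 0 < d -> is_vec d (vmod d f).
Proof. by move=> d_gt0 i; rewrite ffunE ltn_pmod. Qed.

Lemma vmod_small d f : is_vec d f -> vmod d f = f.
Proof. by move=> f_vec; apply/ffunP => i; rewrite ffunE modn_small. Qed.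

Lemma vmod_dvd d m f : d %| m -> vmod d (vmod m f) = vmod d f.
Proof. by move=> d_dvd_m; apply/ffunP => i; rewrite !ffunE modn_dvdm. Qed.

Lemma ducci_orbitE d f k : ducci_orbit d f k = vmod d (iter k ducci f).
Proof.
by elim: k => //= k ->; apply/ffunP => i; rewrite !ffunE modnDm.
Qed.

Lemma ducci_orbit_dvd d m f k :
  d %| m -> ducci_orbit d f k = vmod d (ducci_orbit m f k).
Proof. by move=> d_dvd_m; rewrite !ducci_orbitE vmod_dvd. Qed.

Lemma iter_ducci_linear k f i :
  iter k ducci f i = \sum_j f j * iter k ducci (unitv j) i.
Proof.
elim: k i => [|k IH] i /=.
  rewrite (bigD1 i) //= big1 => [|j /negbTE neq_ji].
    by rewrite ffunE eqxx muln1 addn0.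
  by rewrite ffunE eq_sym neq_ji muln0.
rewrite ffunE !IH -big_split; apply: eq_bigr => j _.
by rewrite ffunE mulnDr.
Qed.

Lemma ducci_orbit_linear d f k i :
  ducci_orbit d f k i = (\sum_j f j * ducci_orbit d (unitv j) k i) %% d.
Proof.
rewrite ducci_orbitE ffunE iter_ducci_linear -[LHS]modn_summ -[RHS]modn_summ.
congr (_ %% _); apply: eq_bigr => j _.
by rewrite ducci_orbitE ffunE modnMmr.
Qed.

Lemma Tmap_rotv d f : Tmap d (rotv f) = rotv (Tmap d f).
Proof. by apply/ffunP => i; rewrite !ffunE ordSK ord_predK. Qed.

Lemma ducci_orbit_iter_rotv d f t k :
  ducci_orbit d (iter t rotv f) k = iter t rotv (ducci_orbit d f k).
Proof.
have vmod_rotv g : vmod d (rotv g) = rotv (vmod d g) by apply/ffunP => i; rewrite !ffunE.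
have iter_Tmap_rotv g : iter k (@Tmap d n) (rotv g) = rotv (iter k (@Tmap d n) g).
  by elim: k => //= k ->; rewrite Tmap_rotv.
by elim: t => //= t <-; rewrite /ducci_orbit vmod_rotv iter_Tmap_rotv.
Qed.

Lemma unitv_iter_rotv (i j : 'I_n) : exists t, unitv i = iter t rotv (unitv j).
Proof.
have rotv_unitv (l : 'I_n) : rotv (unitv l) = unitv (ordS l).
  apply/ffunP => i'; rewrite !ffunE; congr (nat_of_bool _).
  by apply/eqP/eqP => [<- | ->]; rewrite ?ord_predK ?ordSK.
have val_iter_ordS t : val (iter t (@ordS n) j) = (j + t) %% n.
  elim: t => [|t IH] /=; first by rewrite addn0 modn_small.
  by rewrite IH -addn1 modnDml addn1 addnS.
have iter_rotv_unitv t : iter t rotv (unitv j) = unitv (iter t (@ordS n) j).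
  by elim: t => //= t ->; rewrite rotv_unitv.
exists (i + n - j); rewrite iter_rotv_unitv; congr unitv.
apply: val_inj; rewrite val_iter_ordS.
have -> : j + (i + n - j) = i + n by have := ltn_ord j; lia.
by rewrite modnDr modn_small.
Qed.

Lemma unitv_period_ducci_orbit d (j : 'I_n) P f :
  eventual_period (ducci_orbit d (unitv j)) P -> eventual_period (ducci_orbit d f) P.
Proof.
case=> P_gt0 [N hN]; split=> //; exists N => k le_Nk.
have unitv_periodic i : ducci_orbit d (unitv i) (k + P) = ducci_orbit d (unitv i) k.
  by have [t ->] := unitv_iter_rotv i j; rewrite !ducci_orbit_iter_rotv hN.
apply/ffunP => i; rewrite [LHS]ducci_orbit_linear [RHS]ducci_orbit_linear.
by under eq_bigr => l _ do rewrite unitv_periodic.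
Qed.

Lemma ducci_orbit_eventually_periodic d f :
  0 < d -> exists P, eventual_period (ducci_orbit d f) P.
Proof.
move=> d_gt0.
pose code k : {ffun 'I_n -> 'I_d} :=
  [ffun i => Ordinal (ltn_pmod (iter k ducci f i) d_gt0)].
have [i [j [lt_ij eq_ij]]] := finType_seq_repeats code.
exists (j - i); apply: iter_eventual_period lt_ij _.
rewrite -/(ducci_orbit d f i) -/(ducci_orbit d f j) !ducci_orbitE.
apply/ffunP => l; have := congr1 (fun c : {ffun 'I_n -> 'I_d} => val (c l)) eq_ij.
by rewrite /= !ffunE.
Qed.

Lemma cycle_lengthE m a P : is_vec m a ->
  cycle_length m a P <-> least_eventual_period (ducci_orbit m a) P.
Proof.
move=> a_vec; apply: (eq_least_eventual_period (x := fun k => iter k (@Tmap m n) a)).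
by move=> k; rewrite /ducci_orbit vmod_small.
Qed.

Lemma cycle_length_vmod d f P :
  cycle_length d (vmod d f) P <-> least_eventual_period (ducci_orbit d f) P.
Proof. by []. Qed.

Lemma Pmax_least_period_unitv d q (j : 'I_n) : 0 < d -> Pmax d n q ->
  least_eventual_period (ducci_orbit d (unitv j)) q.
Proof.
move=> d_gt0 [[b [b_vec /(cycle_lengthE _ b_vec) b_least]] q_max].
have [P /ex_least_eventual_period[E E_least]] :=
  ducci_orbit_eventually_periodic (unitv j) d_gt0.
have le_Eq : E <= q.
  by apply: (q_max _ _ (vmod_is_vec (unitv j) d_gt0)); apply/cycle_length_vmod.
have q_dvd_E : q %| E.
  by apply: least_eventual_period_dvd b_least (unitv_period_ducci_orbit _ E_least.1).
have E_gt0 : 0 < E by case: E_least => -[].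
have -> : q = E by apply/eqP; rewrite eqn_leq le_Eq dvdn_leq.
exact: E_least.
Qed.

Lemma ducci_orbit_period_prod r (p : 'I_r -> nat) f P :
  (forall i j, i != j -> coprime (p i) (p j)) ->
  eventual_period (ducci_orbit (\prod_i p i) f) P <->
  0 < P /\ forall i, eventual_period (ducci_orbit (p i) f) P.
Proof.
move=> p_coprime; have p_dvd i : p i %| \prod_i p i by rewrite (bigD1 i) ?dvdn_mulr.
split=> [hP | [P_gt0 hP]].
  split=> [|i]; first by case: hP.
  apply/(eq_eventual_period _ (fun k => ducci_orbit_dvd f k (p_dvd i))).
  exact: eventual_period_comp.
apply: (eventual_period_joint (h := fun i => vmod (p i))) => // [k l eq_kl | i].
  rewrite !ducci_orbitE; apply/ffunP => t; rewrite !ffunE.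
  apply: eqn_mod_prod => // i; have /ffunP/(_ t) := eq_kl i.
  by rewrite !ducci_orbitE !vmod_dvd // !ffunE.
by apply/(eq_eventual_period _ (fun k => esym (ducci_orbit_dvd f k (p_dvd i)))).
Qed.

End Ducci.

Theorem theorem3p2 (n r : nat) (p : 'I_r -> nat) (q : 'I_r -> nat) :
  0 < n ->
  (forall i, 0 < p i) ->
  (forall i j, i != j -> coprime (p i) (p j)) ->
  (forall i, Pmax (p i) n (q i)) ->
  Pmax (\prod_(i < r) p i) n (\big[lcmn/1]_(i < r) q i).
Proof.
move=> n_gt0 p_gt0 p_coprime q_Pmax.
set m := \prod_(i < r) p i; set L := \big[lcmn/1]_(i < r) q i.
have m_gt0 : 0 < m by apply: prodn_gt0.
pose j : 'I_n := Ordinal n_gt0.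
have q_least i := Pmax_least_period_unitv j (p_gt0 i) (q_Pmax i).
have L_gt0 : 0 < L.
  apply: (big_ind (leq 1)) => // [a b a_gt0 b_gt0 | i _]; first by rewrite lcmn_gt0 a_gt0.
  by case: (q_least i) => -[].
have L_least : least_eventual_period (ducci_orbit m (unitv j)) L.
  apply: least_eventual_period_multiples => // Q.
  rewrite ducci_orbit_period_prod //; split=> -[Q_gt0 hQ]; split=> //.
    by apply/dvdn_biglcmP => i _; apply: least_eventual_period_dvd (q_least i) (hQ i).
  move=> i; apply/(least_eventual_periodP (q_least i)); split=> //.
  by apply: dvdn_trans hQ; apply: (biglcmn_sup i).
split.
  exists (vmod m (unitv j)).
  by split; [exact: vmod_is_vec | apply/cycle_length_vmod].
move=> a Q a_vec /(cycle_lengthE _ a_vec) a_least; apply: dvdn_leq L_gt0 _.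
exact: least_eventual_period_dvd a_least (unitv_period_ducci_orbit _ L_least.1).
Qed.
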